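(* There exists a constant $c>0$ such that for all even positive integers $n,m$, every eigenvalue $\lambda$ of the $nm\times nm$ Laplacian matrix $$\mathbf{L}=\mathbf{I}_n\otimes\big(\mathbf{D}^{(2)}_m+\mathbf{T}_{\sin^2}^{-1}\mathbf{T}_{\cos\sin}\mathbf{D}_m\big)+\mathbf{D}^{(2)}_n\otimes \mathbf{T}_{\sin^2}^{-1}$$ satisfies $|\lambda|\le c\,(n^2m^2+m^3)$. That is, $|\lambda_{\max}(\mathbf{L})|=\mathcal{O}(n^2m^2+m^3)$.
   Context: Here $\otimes$ is the Kronecker product and $\mathbf{I}_n$ is the $n\times n$ identity. For an even integer $m$: - $\mathbf{D}_m=\mathrm{diag}\big(i\cdot(0,-m/2+1,-m/2+2,\ldots,m/2-1)\big)$ ($m\times m$, $i=\sqrt{-1}$). - $\mathbf{D}^{(2)}_m=\mathrm{diag}\big(-j^2\big)_{j=-m/2}^{m/2-1}$; $\mathbf{D}^{(2)}_n$ is defined in the same way with $n$ in place of $m$. - $\mathbf{P}$ is the $(m+1)\times m$ matrix with $\mathbf{P}_{1,1}=\mathbf{P}_{m+1,1}=1/2$, $\mathbf{P}_{j,j}=1$ for $2\le j\le m$, and all other entries zero. - $\mathbf{Q}$ is the $m\times(m+5)$ matrix with $\mathbf{Q}_{j,j+2}=1$ for $1\le j\le m$, $\mathbf{Q}_{1,m+3}=1$, and all other entries zero. - $\mathbf{M}_{\sin^2}$ is the $(m+5)\times(m+5)$ symmetric Toeplitz matrix with $1/2$ on the main diagonal, $-1/4$ in entries $(r,r\pm2)$,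 and zeros elsewhere. - $\mathbf{M}_{\cos\sin}$ is the $(m+5)\times(m+5)$ Toeplitz matrix with entries $(r,r+2)$ equal to $i/4$, entries $(r+2,r)$ equal to $-i/4$, and zeros elsewhere. - $\mathbf{M}(:,3{:}m{+}3)$ denotes the submatrix of columns $3$ through $m+3$. - $\mathbf{T}_{\sin^2}=\mathbf{Q}\,\mathbf{M}_{\sin^2}(:,3{:}m{+}3)\,\mathbf{P}$ and $\mathbf{T}_{\cos\sin}=\mathbf{Q}\,\mathbf{M}_{\cos\sin}(:,3{:}m{+}3)\,\mathbf{P}$ (both $m\times m$). The matrix $\mathbf{T}_{\sin^2}$ is invertible, so $\mathbf{L}$ is well defined. *)

(* Kronecker product = mathcomp-real-closed's [tensmx]
   (standard ordering: index (i1,i2) |-> i1 * p + i2). *)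
From HB Require Import structures.
From mathcomp Require Import all_boot all_order all_algebra.
From mathcomp Require Import mxtens zify.
Set Implicit Arguments. Unset Strict Implicit. Unset Printing Implicit Defensive.
Import Order.TTheory GRing.Theory Num.Theory.
Local Open Scope ring_scope.

Section Defs.
Variable C : numClosedFieldType.

(* All indices below are 0-based: the paper's index j corresponds to j-1. *)

Definition Dm (m : nat) : 'M[C]_m :=
  \matrix_(j < m, k < m)
    (if j == k then (if j == 0%N :> nat then 0 else 'i * (j%:R - m%:R / 2)) else 0).

Definition D2 (m : nat) : 'M[C]_m :=
  \matrix_(j < m, k < m) (if j == k then - (j%:R - m%:R / 2) ^+ 2 else 0).

Definition Pmx (m : nat) : 'M[C]_(m.+1, m) :=
  \matrix_(r < m.+1, s < m)
    (if ((r == 0%N :> nat) || (r == m :> nat)) && (s == 0%N :> nat) then 2^-1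
     else if (r == s :> nat) && (1 <= r)%N && (r <= m.-1)%N then 1 else 0).

Definition Qmx (m : nat) : 'M[C]_(m, m + 5) :=
  \matrix_(r < m, s < m + 5)
    (if (s == (r + 2)%N :> nat) || ((r == 0%N :> nat) && (s == (m + 2)%N :> nat)) then 1 else 0).

Definition Msin2 (m : nat) : 'M[C]_(m + 5) :=
  \matrix_(r < m + 5, s < m + 5)
    (if r == s :> nat then 2^-1
     else if (s == (r + 2)%N :> nat) || (r == (s + 2)%N :> nat) then - 4^-1 else 0).

Definition Mcossin (m : nat) : 'M[C]_(m + 5) :=
  \matrix_(r < m + 5, s < m + 5)
    (if s == (r + 2)%N :> nat then 'i / 4
     else if r == (s + 2)%N :> nat then - ('i / 4) else 0).

(* M(:, 3:m+3): the m+1 columns with paper indices 3..m+3 (0-based 2..m+2) *)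
Lemma colsel_proof (m : nat) (k : 'I_(m.+1)) : (k + 2 < m + 5)%N.
Proof. case: k => k /= Hk; lia. Qed.

Definition colsel (m : nat) (k : 'I_(m.+1)) : 'I_(m + 5) := Ordinal (colsel_proof k).

Definition cols3 (m : nat) (M : 'M[C]_(m + 5)) : 'M[C]_(m + 5, m.+1) :=
  colsub (@colsel m) M.

Definition Tsin2 (m : nat) : 'M[C]_m := Qmx m *m cols3 (Msin2 m) *m Pmx m.
Definition Tcossin (m : nat) : 'M[C]_m := Qmx m *m cols3 (Mcossin m) *m Pmx m.

Definition Lmx (n m : nat) : 'M[C]_(n * m) :=
  tensmx (1%:M : 'M[C]_n) (D2 m + invmx (Tsin2 m) *m Tcossin m *m Dm m)
  + tensmx (D2 n) (invmx (Tsin2 m)).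

End Defs.

(* Eigenvalues are taken of row vectors, v *m L = lambda *: v.  For a row vector x of
   length m, 4 (x Tsin2)_s = 2 X_s - X_(s-2) - X_(s+2), where X is x extended by X_m = x_0
   and by zeros, except that entry 0 averages the two ends of the band.  So x Tsin2 is a
   second difference along the odd indices (a chain with zero ends) and along the even
   indices (a cycle); summing twice gives |x_j| <= 8 m^2 max_s |(x Tsin2)_s|, and in
   particular Tsin2 is invertible.  Tcossin is a band with entries of modulus 1/4, so it
   does not increase the sup norm.  On the i-th block w of an eigenvector, L acts as
   w (D2_m + Tsin2^-1 Tcossin D_m) + (D2_n)_ii w Tsin2^-1; evaluating at an index s where
   |w_s| is maximal and bounding w Tsin2^-1 by 8 m^2 |w_s| gives
   |lambda| <= 4 m^2 + 16 m^3 + 32 n^2 m^2. *)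

From HB Require Import structures.
From mathcomp Require Import all_boot all_order all_algebra.
From mathcomp Require Import mxtens ring zify.
Set Implicit Arguments. Unset Strict Implicit. Unset Printing Implicit Defensive.
Import Order.TTheory GRing.Theory Num.Theory.
Local Open Scope ring_scope.

Section SecondDifferences.
Variable R : numFieldType.
Implicit Types (W : nat -> R) (F : R).

Lemma ler_norm_sum_nat (G : nat -> R) (m n : nat) (B : R) :
  (forall i, (m <= i < n)%N -> `|G i| <= B) ->
  `|\sum_(m <= i < n) G i| <= (n - m)%:R * B.
Proof.
move=> hG; apply: le_trans (ler_norm_sum _ _ _) _.
by rewrite mulr_natl -sumr_const_nat ler_sum_nat.
Qed.

Lemma dirichlet_second_diff_bound W (N : nat) F :
  0 <= F -> W 0 = 0 -> W N = 0 ->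
  (forall k, (k.+1 < N)%N -> `|W k.+1 *+ 2 - W k - W k.+2| <= F) ->
  forall k, (k <= N)%N -> `|W k| <= (N ^ 2 * 2)%:R * F.
Proof.
move=> F0 W0 WN hW.
have [->|N0] := posnP N.
  by move=> k; rewrite leqn0 => /eqP ->; rewrite W0 normr0 mulr_ge0.
pose D k := W k.+1 - W k.
have telescope k : W k = \sum_(0 <= j < k) D j by rewrite telescope_sumr // W0 subr0.
have drift k : (k < N)%N -> `|D k - D 0%N| <= N%:R * F.
  move=> ltkN; rewrite -telescope_sumr //; apply: le_trans (ler_norm_sum_nat (B := F) _) _.
    move=> j /andP[_ ltjk].
    have -> : D j.+1 - D j = - (W j.+1 *+ 2 - W j - W j.+2) by rewrite /D; ring.
    by rewrite normrN hW //; lia.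
  by rewrite subn0 ler_wpM2r // ler_nat ltnW.
have D0 : `|D 0%N| <= N%:R * F.
  have sumD : \sum_(0 <= k < N) D k = 0 by rewrite telescope_sumr // WN W0 subrr.
  have : N%:R * D 0%N = \sum_(0 <= k < N) (D 0%N - D k).
    by rewrite sumrB sumD subr0 sumr_const_nat subn0 mulr_natl.
  move=> /(congr1 (@Num.norm _ _)); rewrite normrM normr_nat => eND.
  rewrite -(@ler_pM2l _ N%:R) ?ltr0n // eND.
  apply: le_trans (ler_norm_sum_nat (B := N%:R * F) _) _; last by rewrite subn0.
  by move=> k /andP[_ ltkN]; rewrite distrC drift.
have Dk k : (k < N)%N -> `|D k| <= (N * 2)%:R * F.
  move=> ltkN; have -> : D k = D 0%N + (D k - D 0%N) by ring.
  apply: le_trans (ler_normD _ _) _.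
  by rewrite natrM mulr_natr mulrnAl mulr2n lerD ?drift.
move=> k lekN; rewrite telescope; apply: le_trans (ler_norm_sum_nat (B := (N * 2)%:R * F) _) _.
  by move=> j /andP[_ ltjk]; apply: Dk; lia.
by rewrite mulrA -natrM ler_wpM2r // ler_nat; nia.
Qed.

Lemma cyclic_second_diff_bound W (p : nat) F :
  (0 < p)%N -> 0 <= F -> W 1%N = 0 -> W p.*2.+3 = 0 -> W p.*2.+2 = W 2%N ->
  (forall s, (0 < s < p.*2)%N -> `|W s.+2 *+ 2 - W s - W s.+4| <= F) ->
  `|W 2%N *+ 4 - W 4%N - W p.*2| <= F *+ 2 ->
  forall k, (k < p.*2)%N -> `|W k.+2| <= (p ^ 2 * 8)%:R * F.
Proof.
move=> p0 F0 W1 Wodd Wcyc hW hW2.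
(* The odd positions form a chain with zero ends, the even ones a cycle through W 2. *)
have odd_bound j : (j <= p.+1)%N -> `|W j.*2.+1| <= (p.+1 ^ 2 * 2)%:R * F.
  apply: (dirichlet_second_diff_bound (W := fun j => W j.*2.+1)) => // k ltkp.
  by rewrite !doubleS hW //; lia.
pose E j := W j.*2.+2 - W 2%N.
have even_bound j : (j <= p)%N -> `|E j| <= (p ^ 2 * 2)%:R * F.
  apply: dirichlet_second_diff_bound => //; rewrite /E ?subrr ?Wcyc ?subrr // => k ltkp.
  have -> : E k.+1 *+ 2 - E k - E k.+2 = W k.+1.*2.+2 *+ 2 - W k.+1.*2 - W k.+1.*2.+4.
    by rewrite /E !doubleS; ring.
  by rewrite hW //; lia.
have W2_bound : `|W 2%N| <= F + (p ^ 2 * 2)%:R * F.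
  have eW2 : W 2%N *+ 2 = (W 2%N *+ 4 - W 4%N - W p.*2) + E 1%N + E p.-1.
    by rewrite /E -(doubleS p.-1) prednK //; ring.
  suff : `|W 2%N *+ 2| <= (F + (p ^ 2 * 2)%:R * F) * 2.
    by rewrite -(mulr_natr (W 2%N)) normrM normr_nat ler_pM2r ?ltr0n.
  have -> : (F + (p ^ 2 * 2)%:R * F) * 2 = F *+ 2 + (p ^ 2 * 2)%:R * F + (p ^ 2 * 2)%:R * F.
    by ring.
  rewrite eW2; apply: le_trans (ler_normD _ _) _.
  apply: lerD; last exact: even_bound (leq_pred p).
  by apply: le_trans (ler_normD _ _) _; rewrite lerD ?even_bound.
move=> k ltk2p; have := odd_double_half k; case: (odd k) => /= <-.
  rewrite add1n -doubleS; apply: le_trans (odd_bound _ _) _; first by lia.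
  by rewrite ler_wpM2r // ler_nat; nia.
rewrite add0n; have -> : W k./2.*2.+2 = E k./2 + W 2%N by rewrite /E subrK.
apply: le_trans (ler_normD _ _) _; apply: le_trans (lerD (even_bound _ _) W2_bound) _.
  by lia.
have -> : (p ^ 2 * 2)%:R * F + (F + (p ^ 2 * 2)%:R * F) = (p ^ 2 * 4 + 1)%:R * F.
  by rewrite natrD natrM; ring.
by rewrite ler_wpM2r // ler_nat; nia.
Qed.

End SecondDifferences.

Section CenteredIndices.
Variable R : numFieldType.

Lemma norm_center_le (j m : nat) : (j <= m)%N -> `|j%:R - m%:R / 2 : R| <= (m * 2)%:R.
Proof.
move=> le_jm; apply: le_trans (ler_normB _ _) _.
have -> : (m * 2)%:R = m%:R + m%:R :> R by rewrite natrM; ring.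
rewrite normrM normfV !normr_nat lerD ?ler_nat //.
by rewrite ler_pdivrMr ?ltr0n // mulr_natr mulr2n lerDl.
Qed.

Lemma norm_sq_center_le (j m : nat) : (j <= m)%N ->
  `|- (j%:R - m%:R / 2) ^+ 2 : R| <= ((m * 2) ^ 2)%:R.
Proof.
by move=> le_jm; rewrite normrN normrX natrX lerXn2r ?nnegrE ?norm_center_le.
Qed.

End CenteredIndices.

Section ZeroExtension.
Variable V : nmodType.

Lemma sum_pick m (F : nat -> V) k :
  \sum_(i < m) (if (i : nat) == k then F i else 0) = if (k < m)%N then F k else 0.
Proof.
case: ltnP => [ltkm|lemk].
  rewrite (bigD1 (Ordinal ltkm)) //= eqxx big1 ?addr0 // => i neik.
  by rewrite ifF //; apply: contraNF neik => /eqP eik; apply/eqP/val_inj.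
by rewrite big1 // => i _; rewrite ifF //; apply/eqP => eik; move: (ltn_ord i); lia.
Qed.

Definition ext0 m (x : 'rV[V]_m) (k : nat) : V :=
  if insub k is Some j then x 0 j else 0.

Lemma ext0_ord m (x : 'rV[V]_m) (j : 'I_m) : ext0 x j = x 0 j.
Proof. by rewrite /ext0 valK. Qed.

Lemma ext0_out m (x : 'rV[V]_m) k : (m <= k)%N -> ext0 x k = 0.
Proof. by move=> lemk; rewrite /ext0 insubF // ltnNge lemk. Qed.

Lemma sum_pick_row m (x : 'rV[V]_m) k :
  \sum_(i < m) (if (i : nat) == k then x 0 i else 0) = ext0 x k.
Proof.
rewrite (eq_bigr (fun i : 'I_m => if (i : nat) == k then ext0 x i else 0)) => [|i _].
  by rewrite sum_pick; case: ltnP => // /ext0_out ->.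
by rewrite ext0_ord.
Qed.

(* The entries of [x *m Qmx m]: x shifted by two places and closed periodically by x_0. *)
Definition qpad m (x : 'rV[V]_m) (a : nat) : V :=
  if (2 <= a)%N then ext0 x (if a == m + 2 then 0 else a - 2)%N else 0.

Lemma qpad_small m (x : 'rV[V]_m) a : (a < 2)%N -> qpad x a = 0.
Proof. by rewrite /qpad ltnNge => /negbTE ->. Qed.

Lemma qpadSS m (x : 'rV[V]_m) (j : 'I_m) : qpad x j.+2 = x 0 j.
Proof. by rewrite /qpad ifF ?subn2 ?ext0_ord //; have := ltn_ord j; lia. Qed.

Lemma qpad_wrap m (x : 'rV[V]_m) : qpad x (m + 2) = qpad x 2.
Proof. by rewrite /qpad eqxx if_same leq_addl. Qed.

Lemma qpad_end m (x : 'rV[V]_m) k : (m + 3 <= k)%N -> qpad x k = 0.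
Proof. by move=> lek; rewrite /qpad ifT ?ifF ?ext0_out //; lia. Qed.

End ZeroExtension.

Section BandMatrices.
Variable C : numClosedFieldType.

Lemma mulmx_Qmx m (x : 'rV[C]_m) : x *m Qmx C m = \row_a qpad x a.
Proof.
apply/rowP => a; rewrite !mxE /qpad -sum_pick_row.
case: (leqP 2 a) => [le2a|lta2]; last first.
  by apply: big1 => r _; rewrite mxE ifF ?mulr0 //; lia.
apply: eq_bigr => r _; rewrite mxE; have := ltn_ord r.
by repeat case: ifP; rewrite ?mulr1 ?mulr0 //; lia.
Qed.

Definition band m (d u l : C) : 'M[C]_m :=
  \matrix_(a, c)
    (d *+ (a == c :> nat) + u *+ (c == a + 2 :> nat)%N + l *+ (a == c + 2 :> nat)%N).

Lemma Msin2_band m : Msin2 C m = band (m + 5) (2^-1) (- 4^-1) (- 4^-1).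
Proof.
apply/matrixP => a c; rewrite !mxE.
by repeat case: ifP; repeat case: eqP; rewrite /= ?mulr0n ?mulr1n ?addr0 ?add0r //; lia.
Qed.

Lemma Mcossin_band m : Mcossin C m = band (m + 5) 0 ('i / 4) (- ('i / 4)).
Proof.
apply/matrixP => a c; rewrite !mxE.
by repeat case: ifP; repeat case: eqP; rewrite /= ?mulr0n ?mulr1n ?addr0 ?add0r //; lia.
Qed.

Definition band_mix (d u l : C) (W : nat -> C) (b : nat) : C :=
  d * W b.+2 + u * W b + l * W b.+4.

Lemma mulmx_cols3_band m (W : nat -> C) d u l :
  (\row_(a < m + 5) W a) *m cols3 (band (m + 5) d u l) = \row_(b < m.+1) band_mix d u l W b.
Proof.
apply/rowP => b; rewrite !mxE.
transitivity (\sum_(a < (m + 5)%N) ((if (a : nat) == b.+2 then d * W a else 0)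
    + (if (a : nat) == b then u * W a else 0) + (if (a : nat) == b.+4 then l * W a else 0))).
  apply: eq_bigr => a _; rewrite !mxE /= mulrC.
  by repeat case: eqP; rewrite /= ?(mulr0n, mulr1n, mul0r, addr0, add0r) //; lia.
rewrite !big_split (sum_pick _ (fun a => d * W a)) (sum_pick _ (fun a => u * W a)).
by rewrite (sum_pick _ (fun a => l * W a)) !ifT //; have := ltn_ord b; lia.
Qed.

Lemma mulmx_Pmx m (Z : nat -> C) :
  (\row_(b < m.+1) Z b) *m Pmx C m
  = \row_(s < m) (if s == 0 :> nat then (Z 0%N + Z m) / 2 else Z s).
Proof.
apply/rowP => s; rewrite !mxE; have lt_sm := ltn_ord s.
move s0E : (s == 0 :> nat) => s0.
transitivity (\sum_(b < m.+1) ((if (b : nat) == 0%N then Z b / 2 *+ s0 else 0)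
    + (if (b : nat) == m then Z b / 2 *+ s0 else 0)
    + (if (b : nat) == s then Z b *+ ~~ s0 else 0))).
  apply: eq_bigr => b _; rewrite !mxE -s0E /=; have := ltn_ord b.
  by (repeat case: eqP); (repeat case: ifPn);
    rewrite /= ?(mulr0n, mulr1n, mulr0, mulr1, addr0, add0r) //; lia.
rewrite !big_split (sum_pick _ (fun b => Z b / 2 *+ s0)) (sum_pick _ (fun b => Z b / 2 *+ s0)).
rewrite (sum_pick _ (fun b => Z b *+ ~~ s0)) ltn0Sn ltnSn (leqW lt_sm).
by case: s0 {s0E}; rewrite /= ?(mulr0n, mulr1n, addr0, add0r) // mulrDl.
Qed.

Definition Tband m (d u l : C) : 'M[C]_m := Qmx C m *m cols3 (band (m + 5) d u l) *m Pmx C m.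

Lemma Tsin2_band m : Tsin2 C m = Tband m (2^-1) (- 4^-1) (- 4^-1).
Proof. by rewrite /Tsin2 Msin2_band. Qed.

Lemma Tcossin_band m : Tcossin C m = Tband m 0 ('i / 4) (- ('i / 4)).
Proof. by rewrite /Tcossin Mcossin_band. Qed.

Lemma mulmx_Tband m (x : 'rV[C]_m) d u l (s : 'I_m) :
  (x *m Tband m d u l) 0 s = if s == 0 :> nat
    then (band_mix d u l (qpad x) 0 + band_mix d u l (qpad x) m) / 2
    else band_mix d u l (qpad x) s.
Proof. by rewrite /Tband !mulmxA mulmx_Qmx mulmx_cols3_band mulmx_Pmx mxE. Qed.

Lemma norm_qpad_le m (x : 'rV[C]_m) U a :
  0 <= U -> (forall j, `|x 0 j| <= U) -> `|qpad x a| <= U.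
Proof.
rewrite /qpad /ext0 => U0 hx; case: ifP => _; last by rewrite normr0.
by case: insubP => [j _ _|_]; [apply: hx | rewrite normr0].
Qed.

Lemma Tsin2_inner m (x : 'rV[C]_m) (s : 'I_m) : (0 < s)%N ->
  4 * (x *m Tsin2 C m) 0 s = qpad x s.+2 *+ 2 - qpad x s - qpad x s.+4.
Proof.
by move=> s_gt0; rewrite Tsin2_band mulmx_Tband ifF ?/band_mix; [field | lia].
Qed.

Lemma Tsin2_corner m (x : 'rV[C]_m) (s : 'I_m) : s = 0 :> nat ->
  8 * (x *m Tsin2 C m) 0 s = qpad x 2 *+ 4 - qpad x 4 - qpad x m.
Proof.
move=> s0; rewrite Tsin2_band mulmx_Tband s0 eqxx /band_mix.
rewrite (qpad_end x (_ : m + 3 <= m.+4)%N); last by lia.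
rewrite -(addn2 m) qpad_wrap (qpad_small x (isT : 0 < 2)%N).
by field.
Qed.

Lemma norm_le_mulmx_Tsin2 m (x : 'rV[C]_m) (Y : C) : ~~ odd m -> 0 <= Y ->
  (forall s, `|(x *m Tsin2 C m) 0 s| <= Y) -> forall j, `|x 0 j| <= (m ^ 2 * 8)%:R * Y.
Proof.
move=> even_m Y0 hY j.
have [p m2p] : exists p, m = p.*2.
  by exists m./2; rewrite -[LHS]odd_double_half (negbTE even_m).
subst m; have p_gt0 : (0 < p)%N by have := ltn_ord j; lia.
have hYc (s : 'I_p.*2) (c : C) : 0 <= c -> `|c * (x *m Tsin2 C p.*2) 0 s| <= c * Y.
  by move=> c0; rewrite normrM ger0_norm // ler_wpM2l.
rewrite -qpadSS; apply: le_trans.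
  apply: (cyclic_second_diff_bound (p := p) (F := 4 * Y)) => //.
  - exact: mulr_ge0.
  - by apply: qpad_end; lia.
  - by rewrite -addn2 qpad_wrap.
  - move=> s /andP[s_gt0 lt_s]; have := hYc (Ordinal lt_s) 4 (ler0n _ 4).
    by rewrite Tsin2_inner.
  - have -> : 4 * Y *+ 2 = 8 * Y by ring.
    have m_gt0 : (0 < p.*2)%N by rewrite double_gt0.
    by have := hYc (Ordinal m_gt0) 8 (ler0n _ 8); rewrite Tsin2_corner.
by rewrite mulrA -natrM ler_wpM2r // ler_nat -mul2n; nia.
Qed.

Lemma Tsin2_unit m : ~~ odd m -> Tsin2 C m \in unitmx.
Proof.
move=> even_m; rewrite -row_free_unit -kermx_eq0; apply/eqP/matrixP => i j.
set x := row i (kermx (Tsin2 C m)).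
have x_ker : x *m Tsin2 C m = 0 by rewrite -row_mul mulmx_ker row0.
have x0 s : `|(x *m Tsin2 C m) 0 s| <= 0 by rewrite x_ker mxE normr0.
have := @norm_le_mulmx_Tsin2 m x 0 even_m (lexx 0) x0 j.
by rewrite mulr0 normr_le0 !mxE => /eqP.
Qed.

Lemma norm_band_mix_le (d u l : C) (W : nat -> C) U b :
  (forall a, `|W a| <= U) -> `|band_mix d u l W b| <= (`|d| + `|u| + `|l|) * U.
Proof.
move=> hW; rewrite /band_mix !mulrDl.
have hterm (c : C) a : `|c * W a| <= `|c| * U by rewrite normrM ler_wpM2l.
apply: le_trans (ler_normD _ _) _; rewrite lerD //.
by apply: le_trans (ler_normD _ _) _; rewrite lerD.
Qed.

Lemma norm_mulmx_Tband_le m (x : 'rV[C]_m) d u l U (s : 'I_m) :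
  0 <= U -> (forall j, `|x 0 j| <= U) ->
  `|(x *m Tband m d u l) 0 s| <= (`|d| + `|u| + `|l|) * U.
Proof.
move=> U0 hx; have hW a := norm_qpad_le a U0 hx.
rewrite mulmx_Tband; case: ifP => _; last exact: norm_band_mix_le.
rewrite normrM normfV normr_nat ler_pdivrMr ?ltr0n // mulr_natr mulr2n.
by apply: le_trans (ler_normD _ _) _; rewrite lerD ?norm_band_mix_le.
Qed.

Lemma norm_mulmx_Tcossin_le m (x : 'rV[C]_m) U (s : 'I_m) :
  0 <= U -> (forall j, `|x 0 j| <= U) -> `|(x *m Tcossin C m) 0 s| <= U.
Proof.
move=> U0 hx; rewrite Tcossin_band; apply: le_trans (norm_mulmx_Tband_le _ _ _ _ U0 hx) _.
rewrite normr0 normrN add0r normrM normCi mul1r normfV normr_nat -mulr2n.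
have -> : 4^-1 *+ 2 = 2^-1 :> C by field.
by rewrite ler_piMl // invf_le1 ?ler1n ?ltr0n.
Qed.

End BandMatrices.

Section KroneckerBlocks.
Variable R : comPzRingType.

Definition tens_block n m (v : 'rV[R]_(n * m)) (i : 'I_n) : 'rV[R]_m :=
  \row_l v 0 (mxtens_index (i, l)).

Lemma sum_mxtens_index n m (F : 'I_(n * m) -> R) :
  \sum_t F t = \sum_(j < n) \sum_(l < m) F (mxtens_index (j, l)).
Proof.
rewrite pair_big (reindex (@mxtens_index n m)) //=.
  by apply: eq_bigr => -[j l].
by exists (@mxtens_unindex n m) => t _; rewrite (mxtens_indexK, mxtens_unindexK).
Qed.

Lemma tens_blockD n m (v1 v2 : 'rV[R]_(n * m)) i :
  tens_block (v1 + v2) i = tens_block v1 i + tens_block v2 i.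
Proof. by apply/rowP => k; rewrite !mxE. Qed.

Lemma tens_blockZ n m (a : R) (v : 'rV[R]_(n * m)) i :
  tens_block (a *: v) i = a *: tens_block v i.
Proof. by apply/rowP => k; rewrite !mxE. Qed.

Lemma tens_block_mulmx_diag_tens n m (v : 'rV[R]_(n * m)) (d : 'rV_n) (Y : 'M_m) i :
  tens_block (v *m (diag_mx d *t Y)) i = d 0 i *: (tens_block v i *m Y).
Proof.
apply/rowP => k; rewrite !mxE sum_mxtens_index (bigD1 i) //= [X in _ + X]big1 ?addr0.
  rewrite mulr_sumr; apply: eq_bigr => l _.
  by rewrite tensmxE !mxE eqxx mulr1n mulrCA mulrA.
move=> j neji; apply: big1 => l _.
by rewrite tensmxE !mxE (negbTE neji) mulr0n mul0r mulr0.
Qed.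

Lemma tens_block_neq0 n m (v : 'rV[R]_(n * m)) :
  v != 0 -> exists i k, tens_block v i 0 k != 0.
Proof.
move=> v_neq0; have /existsP [t vt_neq0] : [exists t, v 0 t != 0].
  apply: contraNT v_neq0 => /existsPn v0; apply/eqP/rowP => t.
  by rewrite mxE; apply/eqP/negPn/v0.
by case: (mxtens_indexP t) vt_neq0 => i k vik; exists i, k; rewrite mxE.
Qed.

End KroneckerBlocks.

Section Eigenvalues.
Variable C : numClosedFieldType.

Lemma D2_diag m : D2 C m = diag_mx (\row_(j < m) - (j%:R - m%:R / 2) ^+ 2).
Proof. by apply/matrixP => j k; rewrite !mxE; case: eqP. Qed.

Lemma Dm_diag m :
  Dm C m = diag_mx (\row_(j < m) if j == 0 :> nat then 0 else 'i * (j%:R - m%:R / 2)).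
Proof. by apply/matrixP => j k; rewrite !mxE; case: eqP. Qed.

Lemma tens_block_mulmx_Lmx n m (v : 'rV[C]_(n * m)) (i : 'I_n) :
  tens_block (v *m Lmx C n m) i
  = tens_block v i *m (D2 C m + invmx (Tsin2 C m) *m Tcossin C m *m Dm C m)
    + D2 C n i i *: (tens_block v i *m invmx (Tsin2 C m)).
Proof.
rewrite /Lmx mulmxDr -(diag_const_mx n (1 : C)) (D2_diag n) tens_blockD.
by rewrite !tens_block_mulmx_diag_tens mxE scale1r !mxE eqxx mulr1n.
Qed.

Lemma norm_eigenvalue_block_le n m (i : 'I_n) (w : 'rV[C]_m) (k : 'I_m) (lam : C) :
  ~~ odd m -> w 0 k != 0 ->
  w *m (D2 C m + invmx (Tsin2 C m) *m Tcossin C m *m Dm C m)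
    + D2 C n i i *: (w *m invmx (Tsin2 C m)) = lam *: w ->
  `|lam| <= ((m * 2) ^ 2 + m ^ 2 * 8 * (m * 2) + (n * 2) ^ 2 * (m ^ 2 * 8))%:R.
Proof.
move=> even_m wk_neq0 eig.
have [s _ w_max] :=
  @real_arg_maxP _ _ k xpredT (fun j => `|w 0 j|) isT (fun j _ => normr_real _).
set W := `|w 0 s|; have W_gt0 : 0 < W by apply: lt_le_trans (w_max k isT); rewrite normr_gt0.
pose u := w *m invmx (Tsin2 C m).
have u_Tsin2 : u *m Tsin2 C m = w by rewrite /u -mulmxA mulVmx ?mulmx1 ?Tsin2_unit.
have u_le j : `|u 0 j| <= (m ^ 2 * 8)%:R * W.
  by apply: norm_le_mulmx_Tsin2 even_m (ltW W_gt0) _ j => j'; rewrite u_Tsin2; apply: w_max.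
have uT_le := norm_mulmx_Tcossin_le s (mulr_ge0 (ler0n _ _) (ltW W_gt0)) u_le.
have c_le : `|D2 C n i i| <= ((n * 2) ^ 2)%:R.
  by rewrite mxE eqxx norm_sq_center_le // ltnW.
move: eig; rewrite mulmxDr (mulmxA w (invmx _ *m _)) (mulmxA w (invmx _)) -/u.
rewrite (D2_diag m) (Dm_diag m) !mul_mx_diag; clearbody u.
move: (u *m Tcossin C m) uT_le (D2 C n i i) c_le => y y_le c c_le.
move=> /(congr1 (fun x : 'rV_m => x 0 s)); rewrite !mxE => eig_s.
have sq_le := norm_sq_center_le C (ltnW (ltn_ord s)).
have Dm_le : `|if s == 0 :> nat then 0 else 'i * (s%:R - m%:R / 2) : C| <= (m * 2)%:R.
  by case: eqP => _; rewrite ?normr0 ?normrM ?normCi ?mul1r ?norm_center_le // ltnW.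
rewrite -(ler_pM2r W_gt0) /W -normrM -eig_s -/W !natrD !mulrDl.
apply: le_trans (ler_normD _ _) _; apply: lerD.
  apply: le_trans (ler_normD _ _) _; apply: lerD; first by rewrite normrM mulrC ler_wpM2r.
  have -> : (m ^ 2 * 8 * (m * 2))%:R * W = (m ^ 2 * 8)%:R * W * (m * 2)%:R.
    by rewrite natrM; ring.
  by rewrite normrM ler_pM.
have -> : ((n * 2) ^ 2 * (m ^ 2 * 8))%:R * W = ((n * 2) ^ 2)%:R * ((m ^ 2 * 8)%:R * W).
  by rewrite natrM; ring.
by rewrite normrM ler_pM.
Qed.

End Eigenvalues.

Theorem mainTheorem3 (C : numClosedFieldType) :
  exists c : C, 0 < c /\
    forall (n m : nat), (0 < n)%N -> ~~ odd n -> (0 < m)%N -> ~~ odd m ->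
      forall lambda : C, eigenvalue (Lmx C n m) lambda ->
        `|lambda| <= c * ((n ^ 2 * m ^ 2 + m ^ 3)%N)%:R.
Proof.
exists 40; split=> // n m n_gt0 _ _ even_m lam /eigenvalueP [v eig v_neq0].
have [i [k vik_neq0]] := tens_block_neq0 v_neq0.
have := congr1 (fun x => tens_block x i) eig; rewrite tens_block_mulmx_Lmx tens_blockZ => eig_i.
apply: le_trans (norm_eigenvalue_block_le even_m vik_neq0 eig_i) _.
by rewrite -natrM ler_nat; nia.
Qed.
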